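(* Let $K$ be a field of characteristic $0$, $W_n=K[x_1,\dots,x_n]\langle D_{x_1},\dots,D_{x_n}\rangle$ the Weyl algebra, and $S\subseteq\{1,\dots,n\}$ non-empty. For each $j\in S$ let $L_j=\sum_{k=0}^{r_j}\ell_{j,k}D_{x_j}^k\in K[x_1,\dots,x_n]\langle D_{x_j}\rangle$ with $\ell_{j,r_j}\ne0$ and $\max_k\operatorname{tdeg}(\ell_{j,k})=d_j$. Define $C=\operatorname{lcm}_{j\in S}(\ell_{j,r_j})$, $\tilde L_j=(C/\ell_{j,r_j})L_j$, $d_C=\sum_{j\in S}d_j$, $B=\prod_{j\in S}\{0,1,\dots,r_j-1\}\subseteq\mathbb N^S$, $J=\sum_{j\in S}W_n\tilde L_j$, and for $d\in\mathbb N$, $r\in\mathbb Z$, $$\mathcal H_{d,r}=\bigoplus_{\beta\in\mathbb N^S:\ |\beta|\le r\ \text{or}\ \beta\in B}K[x_1,\dots,x_n]_{\le d}\,D_S^\beta,\qquad D_S^\beta=\prod_{j\in S}D_{x_j}^{\beta_j}.$$ Then for all $u,t\in\mathbb N$ and $v\in\mathbb Z$ with $u\ge v$, one has $C^u\mathcal H_{t,v}\subseteq\mathcal H_{t+ud_C,0}+J$. In particular, for every $\alpha\in\mathbb N^S$, $C^{|\alpha|}D_S^\alpha\in\mathcal H_{|\alpha|d_C,0}+J$.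
   Context: $K[x_1,\dots,x_n]_{\le d}$ denotes the polynomials of total degree at most $d$; in $\mathcal H_{d,r}$ polynomial coefficients are written to the left of the monomials $D_S^\beta$. $C^u\mathcal H_{t,v}$ denotes the set of products $C^uh$ in $W_n$ with $h\in\mathcal H_{t,v}$; $J$ is the left ideal of $W_n$ generated by the $\tilde L_j$, $j\in S$. $\operatorname{tdeg}$ is total degree. *)

From HB Require Import structures.
From mathcomp Require Import all_boot all_order all_algebra.
From mathcomp Require Import mpoly.
Set Implicit Arguments. Unset Strict Implicit. Unset Printing Implicit Defensive.
Import Order.TTheory GRing.Theory Num.Theory.
Local Open Scope ring_scope.

(* The Weyl algebra W_n = K[x_1..x_n]<D_{x_1},..,D_{x_n}> is realised as the
   algebra of differential operators with polynomial coefficients acting on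
   K[x_1..x_n] (faithful in characteristic 0). *)

Section Weyl.
Variables (K : fieldType) (n : nat).

Definition wop_t := {mpoly K[n]} -> {mpoly K[n]}.

(* the operator  sum_{(p,beta) in s} p * D^beta ;
   D^beta = prod_i D_{x_i}^{beta_i} is the parallel derivative p^`M[beta] *)
Definition wop (s : seq ({mpoly K[n]} * 'X_{1..n})) : wop_t :=
  fun f => \sum_(pb <- s) pb.1 * f^`M[pb.2].

(* total degree of p is <= d (msize p = 1 + tdeg p, msize 0 = 0) *)
Definition tdeg_le (d : nat) (p : {mpoly K[n]}) : bool := (msize p <= d.+1)%N.

(* total degree tdeg p (with the convention tdeg 0 = 0) *)
Definition tdeg (p : {mpoly K[n]}) : nat := (msize p).-1.

(* beta is a multi-index in N^S (zero outside S) *)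
Definition suppS (S : {set 'I_n}) (b : 'X_{1..n}) : bool :=
  [forall i, (i \notin S) ==> (b i == 0%N)].

Definition inB (S : {set 'I_n}) (r : 'I_n -> nat) (b : 'X_{1..n}) : bool :=
  [forall i, (i \in S) ==> (b i < r i)%N].

Definition inH (S : {set 'I_n}) (r : 'I_n -> nat) (d : nat) (z : int)
  (A : wop_t) : Prop :=
  exists s, A = wop s /\
    all (fun pb => [&& tdeg_le d pb.1, suppS S pb.2 &
                       ((mdeg pb.2)%:Z <= z) || inB S r pb.2]) s.

Definition Lop (l : 'I_n -> nat -> {mpoly K[n]}) (r : 'I_n -> nat) (j : 'I_n)
  : wop_t :=
  wop [seq (l j k, (U_(j) *+ k)%MM) | k <- iota 0 (r j).+1].

Definition inJ (S : {set 'I_n}) (Lt : 'I_n -> wop_t) (A : wop_t) : Prop :=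
  exists s : 'I_n -> seq ({mpoly K[n]} * 'X_{1..n}),
    A = fun f => \sum_(j in S) wop (s j) (Lt j f).

Definition mdvd (a b : {mpoly K[n]}) : Prop := exists q, b = q * a.

Definition is_lcm (S : {set 'I_n}) (a : 'I_n -> {mpoly K[n]}) (C : {mpoly K[n]})
  : Prop :=
  (forall j, j \in S -> mdvd (a j) C) /\
  (forall M, (forall j, j \in S -> mdvd (a j) M) -> mdvd C M).

Definition dj (l : 'I_n -> nat -> {mpoly K[n]}) (r : 'I_n -> nat) (j : 'I_n)
  : nat := \max_(k < (r j).+1) tdeg (l j k).

Definition dC (S : {set 'I_n}) (l : 'I_n -> nat -> {mpoly K[n]})
  (r : 'I_n -> nat) : nat := (\sum_(j in S) dj l r j)%N.

End Weyl.

From HB Require Import structures.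
From mathcomp Require Import all_boot all_order all_algebra.
From mathcomp Require Import mpoly.
From mathcomp Require Import ring zify.
From Stdlib Require Import FunctionalExtensionality.
Set Implicit Arguments. Unset Strict Implicit. Unset Printing Implicit Defensive.
Import Order.TTheory GRing.Theory Num.Theory.
Local Open Scope ring_scope.

(* A term p D^g with |g| <= u + 1 is either already in H
   (|g| = 0 or g in B) or has g_j >= r_j for some j in S; write
   g = r_j e_j + g'.  By Leibniz, D^g' C = C D^g' + lower order terms, and
   C D^(r_j e_j) = Lt_j - sum_(k < r_j) q_j l_(j,k) D^(k e_j), so that
   C^(u+1) p D^g is an element of J plus terms C^u p' D^g'' with |g''| <= u
   and tdeg p' <= tdeg p + d_C, which are handled by induction.  The bounds
   tdeg C <= d_C and tdeg (q_j l_(j,k)) <= d_C come from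
   C | prod_i l_(i,r_i) and q_j | prod_(i <> j) l_(i,r_i). *)

Section Degree.
Variables (K : fieldType) (n : nat).
Implicit Types (p c : {mpoly K[n]}).

Lemma msize_mderiv i p : (msize p^`M(i) <= msize p)%N.
Proof.
rewrite [X in (X <= _)%N]msizeE; apply/bigmax_leqP_seq => m Hm _.
have: p@_(m + U_(i)) != 0.
  move: Hm; rewrite mcoeff_msupp mcoeff_mderiv.
  by apply: contra => /eqP ->; rewrite mul0rn.
by rewrite -mcoeff_msupp => /msize_mdeg_lt; rewrite mdegD mdeg1 addn1 => /ltnW.
Qed.

Lemma tdeg_leW a b p : (a <= b)%N -> tdeg_le a p -> tdeg_le b p.
Proof. by move=> le_ab /leq_trans; apply. Qed.

Lemma tdeg_le_tdeg p : tdeg_le (tdeg p) p.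
Proof. exact: leqSpred. Qed.

Lemma tdeg_le_mderiv d i p : tdeg_le d p -> tdeg_le d p^`M(i).
Proof. exact: leq_trans (msize_mderiv i p). Qed.

Lemma tdeg_leN d p : tdeg_le d (- p) = tdeg_le d p.
Proof. by rewrite /tdeg_le msizeN. Qed.

Lemma tdeg_leM a b p c : tdeg_le a p -> tdeg_le b c -> tdeg_le (a + b) (p * c).
Proof.
rewrite /tdeg_le => Hp Hc.
have [->|p_neq0] := eqVneq p 0; first by rewrite mul0r msize0.
have [->|c_neq0] := eqVneq c 0; first by rewrite mulr0 msize0.
have p_gt0 : (0 < msize p)%N by rewrite lt0n msize_poly_eq0.
have c_gt0 : (0 < msize c)%N by rewrite lt0n msize_poly_eq0.
rewrite msizeM // -subn1 leq_subLR.
apply: leq_trans (leq_add Hp Hc) _; lia.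
Qed.

Lemma tdeg_leX d u c : tdeg_le d c -> tdeg_le (u * d) (c ^+ u).
Proof.
move=> Hc; elim: u => [|u IHu]; first by rewrite expr0 /tdeg_le msize1.
by rewrite exprS mulSn; apply: tdeg_leM.
Qed.

Lemma tdeg_le_prod (I : Type) (s : seq I) (P : pred I) (F : I -> {mpoly K[n]})
    (d : I -> nat) :
  (forall i, P i -> tdeg_le (d i) (F i)) ->
  tdeg_le (\sum_(i <- s | P i) d i) (\prod_(i <- s | P i) F i).
Proof.
move=> HF; elim/big_rec2: _ => [|i e p Pi Hp]; first by rewrite /tdeg_le msize1.
exact: tdeg_leM (HF i Pi) Hp.
Qed.

Lemma tdeg_le_mdvd d (a b : {mpoly K[n]}) :
  b != 0 -> mdvd a b -> tdeg_le d b -> tdeg_le d a.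
Proof.
move=> b_neq0 [c def_b]; apply: leq_trans.
have [->|a_neq0] := eqVneq a 0; first by rewrite msize0.
have c_neq0 : c != 0 by apply: contraNneq b_neq0 => c0; rewrite def_b c0 mul0r.
have c_gt0 : (0 < msize c)%N by rewrite lt0n msize_poly_eq0.
by rewrite def_b msizeM // addnC -subn1 -addnBA // leq_addr.
Qed.

End Degree.

Section Operators.
Variables (K : fieldType) (n : nat).
Local Notation P := {mpoly K[n]}.
Implicit Types (p a : P) (s : seq (P * 'X_{1..n})).

Lemma wop_nil (f : P) : wop [::] f = 0.
Proof. exact: big_nil. Qed.

Lemma wop_cons pb s (f : P) : wop (pb :: s) f = pb.1 * f^`M[pb.2] + wop s f.
Proof. exact: big_cons. Qed.

Lemma wop_cat s1 s2 (f : P) : wop (s1 ++ s2) f = wop s1 f + wop s2 f.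
Proof. exact: big_cat. Qed.

Lemma wop_opp s (f : P) : wop [seq (- pb.1, pb.2) | pb <- s] f = - wop s f.
Proof. by rewrite /wop big_map -sumrN; apply: eq_bigr => pb _; rewrite mulNr. Qed.

Lemma mulr_wop_mderivm p m s (f : P) :
  p * wop s f^`M[m] = wop [seq (p * pb.1, (m + pb.2)%MM) | pb <- s] f.
Proof.
rewrite /wop big_map mulr_sumr; apply: eq_bigr => pb _.
by rewrite mderivmDm mulrA.
Qed.

Lemma mdeg_gt0_lepU (g : 'X_{1..n}) : (0 < mdeg g)%N -> exists i, (U_(i) <= g)%MM.
Proof.
rewrite lt0n mdegE sum_nat_eq0 => /forallPn [i]; rewrite negb_imply => /andP [_ gi].
exists i; apply/mnm_lepP => j; rewrite mnm1E.
by have [<-|] := eqVneq i j; rewrite // lt0n.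
Qed.

Lemma mdeg_mulU (j : 'I_n) k : mdeg (U_(j) *+ k)%MM = k.
Proof. by rewrite mdegMn mdeg1 mul1n. Qed.

Lemma lepm_mulU (j : 'I_n) k (g : 'X_{1..n}) : (k <= g j)%N -> (U_(j) *+ k <= g)%MM.
Proof.
move=> le_k_gj; apply/mnm_lepP => i; rewrite mulmnE mnm1E.
by case: eqP => [<-|]; rewrite ?mul1n.
Qed.

Lemma mderivmM_lower_order d a (g : 'X_{1..n}) : tdeg_le d a -> exists s,
  (forall f : P, (a * f)^`M[g] = a * f^`M[g] + wop s f) /\
  all (fun pb => [&& tdeg_le d pb.1, (pb.2 <= g)%MM & (mdeg pb.2 < mdeg g)%N]) s.
Proof.
move=> Ha; move Hk : (mdeg g) => k; elim: k g Hk => [|k IHk] g Hk.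
  move/eqP: Hk; rewrite mdeg_eq0 => /eqP ->.
  by exists [::]; split => // f; rewrite !mderivm0m wop_nil addr0.
have [i Ui_le_g] : exists i, (U_(i) <= g)%MM by apply: mdeg_gt0_lepU; rewrite Hk.
set g' := (g - U_(i))%MM; have def_g : g = (g' + U_(i))%MM by rewrite submK.
have Hk' : mdeg g' = k by move: Hk; rewrite def_g mdegD mdeg1 addn1 => -[].
have g'_le_g : (g' <= g)%MM by rewrite def_g lem_addr.
have [s [Hs Hall]] := IHk g' Hk'.
exists ((a^`M(i), g') :: [seq (pb.1^`M(i), pb.2) | pb <- s] ++
        [seq (pb.1, (pb.2 + U_(i))%MM) | pb <- s]); split.
  move=> f; rewrite def_g !mderivmDm !mderivmU1m Hs wop_cons wop_cat /=.
  rewrite mderivD !mderivM /wop !big_map raddf_sum /=.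
  rewrite (eq_bigr (fun pb => pb.1^`M(i) * f^`M[pb.2] + pb.1 * f^`M[pb.2 + U_(i)]));
    last by move=> pb _; rewrite mderivM mderivmDm mderivmU1m.
  by rewrite big_split /= [a^`M(i) * _ + _]addrC -!addrA.
rewrite /= all_cat !all_map tdeg_le_mderiv //= g'_le_g Hk' ltnSn /=.
apply/andP; split; apply/allP => pb /(allP Hall) /and3P [Hd Hle Hlt] /=.
  by rewrite tdeg_le_mderiv //= (lepm_trans Hle g'_le_g) ltnW.
rewrite Hd mdegD mdeg1 addn1 ltnS Hlt andbT def_g.
by apply/mnm_lepP => j; rewrite !mnmDE leq_add2r (mnm_lepP Hle).
Qed.

Variable S : {set 'I_n}.

Lemma suppS_lepm (m1 m2 : 'X_{1..n}) : (m1 <= m2)%MM -> suppS S m2 -> suppS S m1.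
Proof.
move=> /mnm_lepP le_m12 /forallP Hm2; apply/forallP => i; apply/implyP => iS.
by move: (Hm2 i); rewrite iS /= -!leqn0 => /(leq_trans (le_m12 i)).
Qed.

Lemma suppS_add (m1 m2 : 'X_{1..n}) :
  suppS S m1 -> suppS S m2 -> suppS S (m1 + m2)%MM.
Proof.
move=> /forallP Hm1 /forallP Hm2; apply/forallP => i; apply/implyP => iS.
by move: (Hm1 i) (Hm2 i); rewrite iS mnmDE /= => /eqP -> /eqP ->.
Qed.

Lemma suppS_U j k : j \in S -> suppS S (U_(j) *+ k)%MM.
Proof.
move=> jS; apply/forallP => i; apply/implyP => iS.
rewrite mulmnE mnm1E; have [e|//] := eqVneq j i.
by move: iS; rewrite -e jS.
Qed.

End Operators.

Definition Ltilde (K : fieldType) (n : nat) (q : 'I_n -> {mpoly K[n]})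
    (l : 'I_n -> nat -> {mpoly K[n]}) (r : 'I_n -> nat) (j : 'I_n) : wop_t K n :=
  fun f => q j * Lop l r j f.

Section Reduction.
Variables (K : fieldType) (n : nat) (S : {set 'I_n}) (r : 'I_n -> nat)
  (l : 'I_n -> nat -> {mpoly K[n]}) (q : 'I_n -> {mpoly K[n]}).
Local Notation P := {mpoly K[n]}.
Local Notation Lt := (Ltilde q l r).

Definition H0term T (pb : P * 'X_{1..n}) : bool :=
  [&& tdeg_le T pb.1, suppS S pb.2 & ((mdeg pb.2)%:Z <= 0) || inB S r pb.2].

(* [HJ T A] says that [A] lies in H_{T,0} + J, pointwise. *)
Definition HJ T (A : wop_t K n) : Prop :=
  exists s1 (s2 : 'I_n -> seq (P * 'X_{1..n})), all (H0term T) s1 /\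
    forall f, A f = wop s1 f + \sum_(j in S) wop (s2 j) (Lt j f).

Lemma HJ_ext T (A B : wop_t K n) : (forall f, A f = B f) -> HJ T A -> HJ T B.
Proof. by move=> eqAB [s1 [s2 [H1 E]]]; exists s1, s2; split => // f; rewrite -eqAB. Qed.

Lemma HJ0 T : HJ T (fun => 0).
Proof.
exists [::], (fun => [::]); split => // f.
by rewrite wop_nil big1 ?addr0 // => j _; rewrite wop_nil.
Qed.

Lemma HJD T (A B : wop_t K n) : HJ T A -> HJ T B -> HJ T (fun f => A f + B f).
Proof.
move=> [s1 [s2 [H1 E]]] [s1' [s2' [H1' E']]].
exists (s1 ++ s1'), (fun j => s2 j ++ s2' j); split; first by rewrite all_cat H1 H1'.
move=> f; rewrite E E' wop_cat.
under [in RHS]eq_bigr do rewrite wop_cat.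
by rewrite big_split /= addrACA.
Qed.

Lemma HJN T (A : wop_t K n) : HJ T A -> HJ T (fun f => - A f).
Proof.
move=> [s1 [s2 [H1 E]]].
exists [seq (- pb.1, pb.2) | pb <- s1], (fun j => [seq (- pb.1, pb.2) | pb <- s2 j]).
split; first by rewrite all_map; apply/allP => pb /(allP H1); rewrite /H0term /= tdeg_leN.
move=> f; rewrite E wop_opp.
under [in RHS]eq_bigr do rewrite wop_opp.
by rewrite sumrN opprD.
Qed.

Lemma HJB T (A B : wop_t K n) : HJ T A -> HJ T B -> HJ T (fun f => A f - B f).
Proof. by move=> HA /HJN; apply: HJD. Qed.

Lemma HJ_sum T (I : eqType) (s : seq I) (F : I -> wop_t K n) :
  (forall i, i \in s -> HJ T (F i)) -> HJ T (fun f => \sum_(i <- s) F i f).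
Proof.
elim: s => [|i s IHs] HF; first by apply: HJ_ext (HJ0 T) => f; rewrite big_nil.
apply: HJ_ext (HJD (HF i (mem_head _ _)) (IHs _)) => [f|k ks].
  by rewrite big_cons.
by apply: HF; rewrite in_cons ks orbT.
Qed.

Lemma HJ_scaled_wop T c s :
  (forall pb, pb \in s -> HJ T (fun f => c * (pb.1 * f^`M[pb.2]))) ->
  HJ T (fun f => c * wop s f).
Proof. by move=> Hs; apply: HJ_ext (HJ_sum Hs) => f; rewrite /wop mulr_sumr. Qed.

Lemma HJ_Ltilde T j c g : j \in S -> HJ T (fun f => c * (Lt j f)^`M[g]).
Proof.
move=> jS; exists [::], (fun i => if i == j then [:: (c, g)] else [::]).
split => // f; rewrite wop_nil add0r (bigD1 j) //= eqxx wop_cons wop_nil addr0.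
by rewrite big1 ?addr0 // => i /andP [_ /negPf ->]; rewrite wop_nil.
Qed.

Lemma HJ_term T c g : tdeg_le T c -> suppS S g -> (mdeg g == 0%N) || inB S r g ->
  HJ T (fun f => c * f^`M[g]).
Proof.
move=> Hc Hg Hb; exists [:: (c, g)], (fun => [::]); split.
  by rewrite /= andbT /H0term Hc Hg; case/orP: Hb => [/eqP ->|->]; rewrite ?orbT.
move=> f; rewrite wop_cons wop_nil addr0 big1 ?addr0 // => j _.
by rewrite wop_nil.
Qed.

Lemma HJ_inH_inJ T (A : wop_t K n) : HJ T A ->
  exists h' g, inH S r T 0 h' /\ inJ S Lt g /\ A = (fun f => h' f + g f).
Proof.
move=> [s1 [s2 [H1 E]]]; exists (wop s1), (fun f => \sum_(j in S) wop (s2 j) (Lt j f)).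
split; first by exists s1.
split; first by exists s2.
exact: functional_extensionality.
Qed.

Variables (C : P) (dc : nat).
Hypothesis Hq : forall j, j \in S -> C = q j * l j (r j).
Hypothesis C_deg : tdeg_le dc C.
Hypothesis ql_deg : forall j k, j \in S -> (k <= r j)%N -> tdeg_le dc (q j * l j k).

Lemma Ltilde_expansion j (f : P) : j \in S ->
  Lt j f = \sum_(0 <= k < r j) q j * l j k * f^`M[U_(j) *+ k] + C * f^`M[U_(j) *+ r j].
Proof.
move=> jS; rewrite /Ltilde /Lop /wop big_map mulr_sumr.
rewrite -[iota 0 _]/(index_iota 0 (r j).+1) big_nat_recr //= (Hq jS) mulrA.
by congr (_ + _); apply: eq_bigr => k _; rewrite mulrA.
Qed.

Section Step.
Variable u : nat.
Hypothesis IHu : forall t p g, tdeg_le t p -> suppS S g -> (mdeg g <= u)%N || inB S r g ->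
  HJ (t + u * dc) (fun f => C ^+ u * (p * f^`M[g])).

Lemma HJ_commutator t p a m g :
  tdeg_le t p -> tdeg_le dc a -> suppS S m -> suppS S g -> (mdeg m + mdeg g <= u.+1)%N ->
  HJ (t + u.+1 * dc) (fun f => C ^+ u * (p * ((a * f^`M[m])^`M[g] - a * f^`M[m + g]))).
Proof.
move=> Hp Ha Hm Hg Hmg; have [s [Hs Hall]] := mderivmM_lower_order g Ha.
set s' := [seq (p * pb.1, (m + pb.2)%MM) | pb <- s].
apply: HJ_ext (HJ_scaled_wop (c := C ^+ u) (s := s') _) => [f|].
  by rewrite Hs mderivmDm addrC addKr mulr_wop_mderivm.
move=> _ /mapP [pb pb_s ->] /=; have /and3P [Hd Hle Hlt] := allP Hall pb pb_s.
rewrite mulSn addnA; apply: IHu; first exact: tdeg_leM.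
  exact: suppS_add Hm (suppS_lepm Hle Hg).
by rewrite mdegD -ltnS (leq_trans _ Hmg) // ltn_add2l.
Qed.

Lemma HJ_Ltilde_low_term t p j k g : tdeg_le t p -> j \in S -> (k < r j)%N ->
  suppS S g -> (mdeg g + r j <= u.+1)%N ->
  HJ (t + u.+1 * dc) (fun f => C ^+ u * p * (q j * l j k * f^`M[U_(j) *+ k])^`M[g]).
Proof.
move=> Hp jS lt_k_rj Hg deg_g.
have Hql := ql_deg jS (ltnW lt_k_rj).
have Hk : suppS S (U_(j) *+ k) by apply: suppS_U.
have deg_kg : (mdeg (U_(j) *+ k) + mdeg g < u.+1)%N.
  by rewrite mdeg_mulU addnC (leq_trans _ deg_g) // ltn_add2l.
have HJ_main : HJ (t + u.+1 * dc)
    (fun f => C ^+ u * (p * (q j * l j k) * f^`M[U_(j) *+ k + g])).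
  rewrite mulSn addnA; apply: IHu; first exact: tdeg_leM.
    exact: suppS_add.
  by rewrite mdegD -ltnS deg_kg.
apply: HJ_ext (HJD HJ_main (HJ_commutator Hp Hql Hk Hg (ltnW deg_kg))) => f.
by rewrite mderivmDm; ring.
Qed.

Lemma HJ_step t p g : tdeg_le t p -> suppS S g -> (mdeg g <= u.+1)%N || inB S r g ->
  HJ (t + u.+1 * dc) (fun f => C ^+ u.+1 * (p * f^`M[g])).
Proof.
move=> Hp Hg Hgu.
have Cp_deg : tdeg_le (t + u.+1 * dc) (C ^+ u.+1 * p).
  by rewrite addnC; apply: tdeg_leM => //; apply: tdeg_leX.
have [Hb|] := boolP ((mdeg g == 0%N) || inB S r g).
  by apply: HJ_ext (HJ_term Cp_deg Hg Hb) => f; rewrite mulrA.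
rewrite negb_or => /andP [_ gNB].
have deg_g : (mdeg g <= u.+1)%N by case/orP: Hgu => // gB; rewrite gB in gNB.
move: gNB => /forallPn [j]; rewrite negb_imply -leqNgt => /andP [jS rj].
set m := (U_(j) *+ r j)%MM; set g' := (g - m)%MM.
have def_g : g = (m + g')%MM by rewrite addmC submK ?lepm_mulU.
have Hg' : suppS S g' by apply: suppS_lepm Hg; rewrite lem_subr.
have deg_mg : (mdeg m + mdeg g' <= u.+1)%N by rewrite -mdegD -def_g.
have HJ_J := HJ_Ltilde (t + u.+1 * dc) (C ^+ u * p) g' jS.
have HJ_low k : k \in index_iota 0 (r j) ->
    HJ (t + u.+1 * dc) (fun f => C ^+ u * p * (q j * l j k * f^`M[U_(j) *+ k])^`M[g']).
  rewrite mem_index_iota => /andP [_ lt_k_rj].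
  by apply: HJ_Ltilde_low_term; rewrite // addnC -(mdeg_mulU j (r j)).
have HJ_C := HJ_commutator Hp C_deg (suppS_U _ jS) Hg' deg_mg.
apply: HJ_ext (HJB (HJB HJ_J (HJ_sum HJ_low)) HJ_C) => f.
rewrite Ltilde_expansion // raddfD raddf_sum mulrDr mulr_sumr /= -def_g exprS; ring.
Qed.

End Step.

Lemma HJ_reduce u t p g : tdeg_le t p -> suppS S g -> (mdeg g <= u)%N || inB S r g ->
  HJ (t + u * dc) (fun f => C ^+ u * (p * f^`M[g])).
Proof.
elim: u t p g => [|u IHu] t p g Hp Hg Hgu; last exact: HJ_step.
rewrite mul0n addn0; apply: HJ_ext (HJ_term Hp Hg _) => [f|]; first by rewrite mul1r.
by rewrite leqn0 in Hgu.
Qed.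

Lemma mul_lcmX_inH u t (v : int) h : v <= u%:Z -> inH S r t v h ->
  exists h' g, inH S r (t + u * dc) 0 h' /\ inJ S Lt g /\
    (fun f => C ^+ u * h f) = (fun f => h' f + g f).
Proof.
move=> le_vu [s [-> Hs]]; apply: HJ_inH_inJ; apply: HJ_scaled_wop => pb.
move=> /(allP Hs) /and3P [Hd Hsupp Hdeg]; apply: HJ_reduce => //.
case/orP: Hdeg => [le_deg_v|->]; last by rewrite orbT.
by rewrite -(lez_nat _ u) (le_trans le_deg_v le_vu).
Qed.

End Reduction.

Section LcmDegree.
Variables (K : fieldType) (n : nat) (S : {set 'I_n}) (r : 'I_n -> nat)
  (l : 'I_n -> nat -> {mpoly K[n]}) (C : {mpoly K[n]}) (q : 'I_n -> {mpoly K[n]}).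
Hypothesis Hl : forall j, j \in S -> l j (r j) != 0.
Hypothesis HC : is_lcm S (fun j => l j (r j)) C.
Hypothesis Hq : forall j, j \in S -> C = q j * l j (r j).
Local Notation lead_prod := (\prod_(i in S) l i (r i)).
Local Notation lead_prod_but j := (\prod_(i in S | i != j) l i (r i)).

Lemma tdeg_le_dj j k : (k <= r j)%N -> tdeg_le (dj l r j) (l j k).
Proof.
move=> le_k_rj; apply: tdeg_leW (tdeg_le_tdeg (l j k)).
have lt_k_rj1 : (k < (r j).+1)%N by [].
exact: (@leq_bigmax_cond _ _ (fun i : 'I_(r j).+1 => tdeg (l j i)) (Ordinal lt_k_rj1)).
Qed.

Lemma lead_prod_neq0 : lead_prod != 0.
Proof. exact/prodf_neq0. Qed.

Lemma lead_prod_but_neq0 j : lead_prod_but j != 0.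
Proof. by apply/prodf_neq0 => i /andP [/Hl]. Qed.

Lemma lead_prodE j : j \in S -> lead_prod = lead_prod_but j * l j (r j).
Proof. by move=> jS; rewrite (bigD1 j) //= mulrC. Qed.

Lemma lcm_mdvd_lead_prod : mdvd C lead_prod.
Proof. by apply: HC.2 => j jS; exists (lead_prod_but j); apply: lead_prodE. Qed.

Lemma tdeg_le_lcm : tdeg_le (dC S l r) C.
Proof.
apply: tdeg_le_mdvd lead_prod_neq0 lcm_mdvd_lead_prod _.
by apply: tdeg_le_prod => j _; apply: tdeg_le_dj.
Qed.

Lemma tdeg_le_cofactor_coef j k : j \in S -> (k <= r j)%N ->
  tdeg_le (dC S l r) (q j * l j k).
Proof.
move=> jS le_k_rj; have [c def_prod] := lcm_mdvd_lead_prod.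
have q_dvd : mdvd (q j) (lead_prod_but j).
  exists c; apply: (mulIf (Hl jS)).
  by rewrite -lead_prodE // def_prod (Hq jS) mulrA.
rewrite /dC (bigD1 j) //= addnC; apply: tdeg_leM (tdeg_le_dj le_k_rj).
apply: tdeg_le_mdvd (lead_prod_but_neq0 j) q_dvd _.
by apply: tdeg_le_prod => i _; apply: tdeg_le_dj.
Qed.

End LcmDegree.

Lemma inH_mderivm (K : fieldType) (n : nat) (S : {set 'I_n}) (r : 'I_n -> nat)
    (alpha : 'X_{1..n}) :
  suppS S alpha -> inH S r 0 (mdeg alpha) (fun f : {mpoly K[n]} => f^`M[alpha]).
Proof.
move=> Halpha; exists [:: (1, alpha)]; split.
  by apply: functional_extensionality => f; rewrite wop_cons wop_nil mul1r addr0.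
by rewrite /= andbT Halpha lexx /tdeg_le msize1.
Qed.

Unset Implicit Arguments.

Theorem lemma3p13 (K : fieldType) (n : nat)
  (charK : [pchar K] =i pred0)
  (S : {set 'I_n}) (HS : S != set0)
  (r : 'I_n -> nat) (l : 'I_n -> nat -> {mpoly K[n]})
  (Hl : forall j, j \in S -> l j (r j) != 0)
  (C : {mpoly K[n]}) (HC : is_lcm S (fun j => l j (r j)) C)
  (q : 'I_n -> {mpoly K[n]}) (Hq : forall j, j \in S -> C = q j * l j (r j)) :
  let Lt := fun j (f : {mpoly K[n]}) => q j * Lop l r j f in
  (forall (u t : nat) (v : int), v <= u%:Z ->
     forall h, inH S r t v h ->
     exists h' g, inH S r (t + u * dC S l r)%N 0 h' /\ inJ S Lt g /\
       (fun f => C ^+ u * h f) = (fun f => h' f + g f))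
  /\
  (forall alpha : 'X_{1..n}, suppS S alpha ->
     exists h' g, inH S r (mdeg alpha * dC S l r)%N 0 h' /\ inJ S Lt g /\
       (fun f => C ^+ (mdeg alpha) * f^`M[alpha]) = (fun f => h' f + g f)).
Proof.
move=> Lt.
have C_deg := tdeg_le_lcm Hl HC.
have ql_deg := tdeg_le_cofactor_coef Hl HC Hq.
split => [u t v le_vu h|alpha Halpha]; first exact: mul_lcmX_inH.
rewrite -[X in inH _ _ X]add0n.
by apply: (mul_lcmX_inH Hq C_deg ql_deg (lexx _)); apply: inH_mderivm.
Qed.
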